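(* Let $f\in\mathrm{Lip}_{[2]}(\mathbb{R})$ with $\|f\|_{\mathrm{Lip}_{[2]}(\mathbb{R})}\le 1$. Then for every $t\ge0$, $\mathbf{P}^0_t f\in\mathrm{Lip}_{[2]}(\mathbb{R})$: $\mathbf{P}^0_t f$ is $1$-Lipschitz and its derivative is $2$-Lipschitz. Furthermore $\mathscr{L}_0\mathbf{P}^0_t f$ is well defined and, for $t>0$, \[ \|\mathscr{L}_0\mathbf{P}^0_t f\|_\infty\le \frac{2}{1-e^{-t}}\,\|f'\|_\infty . \]
   Context: $Z$ denotes a standard Gumbel random variable (density $e^{-(x+e^{-x})}$ on $\mathbb{R}$). For $t\ge0$, $\mathbf{P}^0_t f(x)=\mathbb{E}\big[f\big(\max(x-t,\ Z+\log(1-e^{-t}))\big)\big]$ (convention $\log 0=-\infty$). $\mathscr{L}_0 f(x)=-f'(x)+e^{-x}\mathbb{E}[f'(x+Y)]$ with $Y\sim\mathcal{E}(1)$, which is the generator of $(\mathbf{P}^0_t)_{t\ge0}$. $\mathrm{Lip}_{[2]}(\mathbb{R})$ is the set of Lipschitz $f:\mathbb{R}\to\mathbb{R}$ whose derivative has a Lipschitz representative, with semi-norm $\|f\|_{\mathrm{Lip}_{[2]}(\mathbb{R})}=\max(\|f\|_{\mathrm{Lip}},\|f'\|_{\mathrm{Lip}})$, $\|g\|_{\mathrm{Lip}}$ being the best Lipschitz constant. *)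

From Stdlib Require Import Reals.
From Coquelicot Require Import Coquelicot.
Open Scope R_scope.

Definition lipschitz_with (L : R) (g : R -> R) : Prop :=
  forall x y, Rabs (g x - g y) <= L * Rabs (x - y).

(* Lip_[2](R): f Lipschitz, (everywhere) differentiable, with Lipschitz derivative.
   (A Lipschitz f whose a.e. derivative has a Lipschitz, hence continuous,
   representative is C^1 with that representative as its derivative.) *)
Definition in_Lip2 (f : R -> R) : Prop :=
  (forall x, ex_derive f x) /\
  (exists L, lipschitz_with L f) /\
  (exists L, lipschitz_with L (Derive f)).

Definition gumbel_density (z : R) : R := exp (- (z + exp (- z))).

(* max(x - t, z + log(1 - e^{-t})), with log 0 = -oo, i.e. = x when t = 0 *)
Definition gumbel_arg (t x z : R) : R :=
  if Rlt_le_dec 0 t then Rmax (x - t) (z + ln (1 - exp (- t))) else x - t.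

Definition P0_integrand (t : R) (f : R -> R) (x : R) : R -> R :=
  fun z => f (gumbel_arg t x z) * gumbel_density z.

Definition P0 (t : R) (f : R -> R) (x : R) : R :=
  RInt_gen (P0_integrand t f x) (Rbar_locally m_infty) (Rbar_locally p_infty).

Definition L0_integrand (f : R -> R) (x : R) : R -> R :=
  fun y => Derive f (x + y) * exp (- y).

Definition L0 (f : R -> R) (x : R) : R :=
  - Derive f x + exp (- x) *
      RInt_gen (L0_integrand f x) (at_point 0) (Rbar_locally p_infty).

(* For t > 0 put a = log (1 - e^-t) and Phi z = exp (- e^-z), the Gumbel distribution
   function.  The maximum max (x - t, Z + a) equals x - t exactly when Z < b := x - t - a, so
     P_t f (x) = f (x - t) Phi (b) + int_b^oo f (z + a) Phi'(z) dz.
   Differentiating in x, the two boundary terms cancel and (P_t f)'(x) = f'(x - t) Phi (b).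
   As f' and Phi are 1-Lipschitz and bounded by 1, (P_t f)' is bounded by 1 and 2-Lipschitz.
   For the generator, |(P_t f)'(x + y)| <= |f'|_oo Phi (x + y - t - a), and
   Phi (x + y - t - a) e^-y = e^(x - t - a) Phi'(x + y - t - a) integrates over y > 0 to at most
   e^(x - t - a); hence e^-x E[(P_t f)'(x + Y)] <= |f'|_oo e^-t / (1 - e^-t), and adding
   |(P_t f)'(x)| <= |f'|_oo gives |f'|_oo / (1 - e^-t).  For t = 0, P_0 f = f. *)

From Stdlib Require Import Reals Lra FunctionalExtensionality.
From Coquelicot Require Import Coquelicot.
Open Scope R_scope.

Lemma lipschitz_with_linear_growth L g w :
  lipschitz_with L g -> Rabs (g w) <= Rabs (g 0) + Rabs L * Rabs w.
Proof.
  intros g_lip. specialize (g_lip w 0). rewrite Rminus_0_r in g_lip.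
  pose proof (Rabs_triang_inv (g w) (g 0)). pose proof (RRle_abs L).
  pose proof (Rabs_pos w). nra.
Qed.

Lemma lipschitz_with_continuous L g x : lipschitz_with L g -> continuous g x.
Proof.
  intros g_lip. apply filterlim_locally. intros eps.
  pose proof (Rabs_pos L). pose proof (RRle_abs L). pose proof (cond_pos eps).
  set (d := eps / (Rabs L + 1)).
  assert (d_pos : 0 < d) by (apply Rdiv_lt_0_compat; lra).
  assert (eps_eq : pos eps = d * (Rabs L + 1)) by (unfold d; field; lra).
  exists (mkposreal d d_pos). intros y y_near.
  change (Rabs (y - x) < d) in y_near. change (Rabs (g y - g x) < eps).
  pose proof (Rabs_pos (y - x)).
  apply Rle_lt_trans with (L * Rabs (y - x)); [apply g_lip | nra].
Qed.

Lemma lipschitz_with_is_derive_le L g x l : lipschitz_with L g -> is_derive g x l -> Rabs l <= L.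
Proof.
  intros g_lip g_der. apply is_derive_Reals in g_der.
  destruct (Rle_or_lt (Rabs l) L) as [|l_gt]; [assumption|exfalso].
  destruct (g_der (Rabs l - L)) as [d d_spec]; [lra|].
  set (h := d / 2).
  assert (h_pos : 0 < h) by (unfold h; pose proof (cond_pos d); lra).
  assert (quot_le : Rabs ((g (x + h) - g x) / h) <= L).
  { unfold Rdiv. rewrite Rabs_mult, Rabs_inv, (Rabs_pos_eq h) by lra.
    apply Rmult_le_reg_r with h; [lra|]. rewrite Rmult_assoc, Rinv_l, Rmult_1_r by lra.
    replace h with (Rabs ((x + h) - x)) at 2 by (rewrite Rabs_pos_eq; [ring | lra]).
    apply g_lip. }
  assert (h_small : Rabs h < d)
    by (rewrite Rabs_pos_eq by lra; unfold h; pose proof (cond_pos d); lra).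
  specialize (d_spec h ltac:(lra) h_small).
  pose proof (Rabs_triang_inv l ((g (x + h) - g x) / h)).
  rewrite Rabs_minus_sym in d_spec. lra.
Qed.

Lemma lipschitz_with_derive_le g g' L :
  (forall x, is_derive g x (g' x)) -> (forall x, Rabs (g' x) <= L) -> lipschitz_with L g.
Proof.
  intros g_der g'_le x y.
  destruct (MVT_gen g y x g') as [c [_ mvt]].
  - intros; apply g_der.
  - intros; apply continuity_pt_filterlim, (ex_derive_continuous (V := R_NormedModule)).
    eexists; apply g_der.
  - rewrite mvt, Rabs_mult. apply Rmult_le_compat_r; [apply Rabs_pos | apply g'_le].
Qed.

Lemma lipschitz_with_weaken L L' g : L <= L' -> lipschitz_with L g -> lipschitz_with L' g.
Proof.
  intros L_le g_lip x y. pose proof (g_lip x y). pose proof (Rabs_pos (x - y)). nra.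
Qed.

Lemma lipschitz_with_shift L g c : lipschitz_with L g -> lipschitz_with L (fun x => g (x - c)).
Proof.
  intros g_lip x y. replace (x - y) with ((x - c) - (y - c)) by ring. apply g_lip.
Qed.

Lemma lipschitz_with_mult L1 L2 B1 B2 u v :
  lipschitz_with L1 u -> lipschitz_with L2 v ->
  (forall x, Rabs (u x) <= B1) -> (forall x, Rabs (v x) <= B2) ->
  lipschitz_with (L1 * B2 + B1 * L2) (fun x => u x * v x).
Proof.
  intros u_lip v_lip u_le v_le x y.
  replace (u x * v x - u y * v y) with ((u x - u y) * v x + u y * (v x - v y)) by ring.
  eapply Rle_trans; [apply Rabs_triang|]. rewrite !Rabs_mult.
  pose proof (u_lip x y). pose proof (v_lip x y). pose proof (u_le y). pose proof (v_le x).
  pose proof (Rabs_pos (u x - u y)). pose proof (Rabs_pos (v x - v y)).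
  pose proof (Rabs_pos (u y)). pose proof (Rabs_pos (v x)). pose proof (Rabs_pos (x - y)).
  nra.
Qed.

Definition gumbel_cdf (z : R) : R := exp (- exp (- z)).

Lemma is_derive_gumbel_cdf z : is_derive gumbel_cdf z (gumbel_density z).
Proof.
  unfold gumbel_cdf, gumbel_density. auto_derive; [exact I|].
  replace (- (z + exp (- z))) with (- z + - exp (- z)) by ring.
  rewrite exp_plus. ring.
Qed.

Lemma gumbel_cdf_gt0 z : 0 < gumbel_cdf z.
Proof. apply exp_pos. Qed.

Lemma gumbel_cdf_le1 z : gumbel_cdf z <= 1.
Proof.
  unfold gumbel_cdf. rewrite <- exp_0. pose proof (exp_pos (- z)).
  left; apply exp_increasing; lra.
Qed.

Lemma gumbel_densityE z : gumbel_density z = exp (- z) * gumbel_cdf z.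
Proof.
  unfold gumbel_density, gumbel_cdf. rewrite <- exp_plus. f_equal; ring.
Qed.

Lemma gumbel_density_ge0 z : 0 <= gumbel_density z.
Proof. left; apply exp_pos. Qed.

Lemma gumbel_density_le1 z : gumbel_density z <= 1.
Proof.
  unfold gumbel_density. rewrite <- exp_0. pose proof (exp_ineq1_le (- z)).
  left; apply exp_increasing; lra.
Qed.

Lemma gumbel_density_le_exp z : gumbel_density z <= exp (- z).
Proof.
  rewrite gumbel_densityE. pose proof (exp_pos (- z)). pose proof (gumbel_cdf_le1 z). nra.
Qed.

Lemma continuous_gumbel_density z : continuous gumbel_density z.
Proof.
  apply (ex_derive_continuous (V := R_NormedModule)).
  unfold gumbel_density. auto_derive. exact I.
Qed.

Lemma gumbel_cdf_lipschitz : lipschitz_with 1 gumbel_cdf.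
Proof.
  apply (lipschitz_with_derive_le gumbel_cdf gumbel_density 1).
  - apply is_derive_gumbel_cdf.
  - intros z. rewrite Rabs_pos_eq by apply gumbel_density_ge0. apply gumbel_density_le1.
Qed.

Lemma is_lim_exp_opp : is_lim (fun z => exp (- z)) p_infty 0.
Proof.
  apply (is_lim_comp exp Ropp p_infty 0 m_infty).
  - apply is_lim_exp_m.
  - apply (is_lim_opp id p_infty p_infty), is_lim_id.
  - exists 0; intros; discriminate.
Qed.

Lemma is_lim_mul_exp_opp : is_lim (fun z => z * exp (- z)) p_infty 0.
Proof.
  apply (is_lim_ext (fun z => - (- z * exp (- z)))); [intros; ring|].
  replace (Finite 0) with (Rbar_opp 0) by (simpl; f_equal; ring).
  apply is_lim_opp.
  apply (is_lim_comp (fun y => y * exp y) Ropp p_infty 0 m_infty).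
  - apply is_lim_mul_exp_m.
  - apply (is_lim_opp id p_infty p_infty), is_lim_id.
  - exists 0; intros; discriminate.
Qed.

Lemma is_lim_gumbel_cdf_m : is_lim gumbel_cdf m_infty 0.
Proof.
  apply (is_lim_comp exp (fun z => - exp (- z)) m_infty 0 m_infty).
  - apply is_lim_exp_m.
  - apply (is_lim_opp (fun z => exp (- z)) m_infty p_infty).
    apply (is_lim_comp exp Ropp m_infty p_infty p_infty).
    + apply is_lim_exp_p.
    + apply (is_lim_opp id m_infty m_infty), is_lim_id.
    + exists 0; intros; discriminate.
  - exists 0; intros; discriminate.
Qed.

Lemma is_lim_gumbel_cdf_p : is_lim gumbel_cdf p_infty 1.
Proof.
  apply (is_lim_comp exp (fun z => - exp (- z)) p_infty 1 0).
  - rewrite <- exp_0. apply is_lim_continuity, derivable_continuous_pt, derivable_pt_exp.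
  - replace (Finite 0) with (Rbar_opp 0) by (simpl; f_equal; ring).
    apply is_lim_opp, is_lim_exp_opp.
  - exists 0. intros z _ eq0. injection eq0. pose proof (exp_pos (- z)). lra.
Qed.

Lemma filterlim_at_point (g : R -> R) b : filterlim g (at_point b) (locally (g b)).
Proof. intros P P_gb. exact (locally_singleton _ _ P_gb). Qed.

Lemma is_lim_shift_p_infty c : is_lim (fun y => y + c) p_infty p_infty.
Proof. intros P [M M_spec]. exists (M - c). intros y y_gt. apply M_spec. lra. Qed.

Lemma is_derive_gumbel_cdf_shift c y :
  is_derive (fun y => gumbel_cdf (y + c)) y (gumbel_density (y + c)).
Proof.
  rewrite <- (scal_one (gumbel_density (y + c))).
  apply (is_derive_comp gumbel_cdf (fun y => y + c)).
  - apply is_derive_gumbel_cdf.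
  - auto_derive; [exact I | reflexivity].
Qed.

Section Antiderivative.

Context {Fa Fb : (R -> Prop) -> Prop} {FFa : Filter Fa} {FFb : Filter Fb}.

Lemma is_RInt_gen_antiderivative (F f : R -> R) la lb :
  (forall x, is_derive F x (f x)) -> (forall x, continuous f x) ->
  filterlim F Fa (locally la) -> filterlim F Fb (locally lb) ->
  is_RInt_gen f Fa Fb (lb - la).
Proof.
  intros F_der f_cont F_la F_lb.
  assert (DF : Derive F = f).
  { apply functional_extensionality; intros x. apply is_derive_unique, F_der. }
  rewrite <- DF. apply is_RInt_gen_Derive; auto.
  - apply filter_forall; intros ab x _. eexists; apply F_der.
  - apply filter_forall; intros ab x _. rewrite DF; apply f_cont.
Qed.

End Antiderivative.

Lemma is_RInt_gen_gumbel_density_lower b :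
  is_RInt_gen gumbel_density (Rbar_locally m_infty) (at_point b) (gumbel_cdf b).
Proof.
  rewrite <- (Rminus_0_r (gumbel_cdf b)).
  apply (is_RInt_gen_antiderivative gumbel_cdf).
  - apply is_derive_gumbel_cdf.
  - apply continuous_gumbel_density.
  - apply is_lim_gumbel_cdf_m.
  - apply filterlim_at_point.
Qed.

Lemma is_RInt_gen_gumbel_density :
  is_RInt_gen gumbel_density (Rbar_locally m_infty) (Rbar_locally p_infty) 1.
Proof.
  rewrite <- (Rminus_0_r 1).
  apply (is_RInt_gen_antiderivative gumbel_cdf).
  - apply is_derive_gumbel_cdf.
  - apply continuous_gumbel_density.
  - apply is_lim_gumbel_cdf_m.
  - apply is_lim_gumbel_cdf_p.
Qed.

Lemma is_RInt_gen_gumbel_cdf_mul_exp c :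
  is_RInt_gen (fun y => gumbel_cdf (y + c) * exp (- y)) (at_point 0) (Rbar_locally p_infty)
    (exp c * (1 - gumbel_cdf c)).
Proof.
  replace (exp c * (1 - gumbel_cdf c)) with (exp c * 1 - exp c * gumbel_cdf (0 + c))
    by (rewrite Rplus_0_l; ring).
  apply (is_RInt_gen_antiderivative (fun y => exp c * gumbel_cdf (y + c))).
  - intros y.
    replace (gumbel_cdf (y + c) * exp (- y)) with (exp c * gumbel_density (y + c)).
    + apply (is_derive_scal (fun y => gumbel_cdf (y + c))), is_derive_gumbel_cdf_shift.
    + rewrite gumbel_densityE, Ropp_plus_distr, exp_plus, (exp_Ropp c).
      pose proof (exp_pos c). field. lra.
  - intros y. apply (continuous_mult (fun y => gumbel_cdf (y + c)) (fun y => exp (- y))).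
    + apply (ex_derive_continuous (V := R_NormedModule)). eexists; apply is_derive_gumbel_cdf_shift.
    + apply (ex_derive_continuous (V := R_NormedModule)). auto_derive. exact I.
  - exact (filterlim_at_point (fun y => exp c * gumbel_cdf (y + c)) 0).
  - apply (is_lim_scal_l (fun y => gumbel_cdf (y + c)) (exp c) p_infty 1).
    apply (is_lim_comp gumbel_cdf (fun y => y + c) p_infty 1 p_infty).
    + apply is_lim_gumbel_cdf_p.
    + apply is_lim_shift_p_infty.
    + exists 0; intros; discriminate.
Qed.

Lemma is_RInt_gen_of_lim_RInt (h : R -> R) a l :
  (forall u v, ex_RInt h u v) ->
  filterlim (fun b => RInt h a b) (Rbar_locally p_infty) (locally l) ->
  is_RInt_gen h (at_point a) (Rbar_locally p_infty) l.
Proof.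
  intros h_int RInt_lim.
  apply filterlimi_lim_ext_loc with (f := fun ab => RInt h (fst ab) (snd ab)).
  - apply filter_forall. intros ab. apply (RInt_correct (V := R_CompleteNormedModule)), h_int.
  - intros P P_l. exists (fun x => x = a) (fun b => P (RInt h a b)).
    + reflexivity.
    + exact (RInt_lim P P_l).
    + intros x y -> P_y. exact P_y.
Qed.

Section Domination.

Variables (h k K : R -> R) (c : R).
Hypothesis h_cont : forall x, continuous h x.
Hypothesis h_le : forall x, c <= x -> Rabs (h x) <= k x.
Hypothesis K_der : forall x, is_derive K x (k x).
Hypothesis k_cont : forall x, continuous k x.

Let h_int a b : ex_RInt h a b.
Proof. apply (ex_RInt_continuous (V := R_CompleteNormedModule)). intros; apply h_cont. Qed.

Lemma abs_RInt_le_antiderivative u v : c <= u -> c <= v -> Rabs (RInt h u v) <= Rabs (K v - K u).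
Proof.
  assert (ordered : forall u v, c <= u <= v -> Rabs (RInt h u v) <= K v - K u).
  { intros p q [cp pq]. apply (norm_RInt_le h k p q); [exact pq | | |].
    - intros x [px xq]. apply h_le. lra.
    - apply (RInt_correct (V := R_CompleteNormedModule)), h_int.
    - apply (is_RInt_derive K k); intros; [apply K_der | apply k_cont]. }
  intros cu cv. destruct (Rle_or_lt u v).
  - eapply Rle_trans; [apply ordered; lra | apply RRle_abs].
  - rewrite <- opp_RInt_swap by apply h_int.
    change (Rabs (- RInt h v u) <= Rabs (K v - K u)).
    rewrite Rabs_Ropp, Rabs_minus_sym.
    eapply Rle_trans; [apply ordered; lra | apply RRle_abs].
Qed.

(* Cauchy criterion: the tails of [RInt h a _] are controlled by the oscillation of [K]. *)
Lemma ex_RInt_gen_dominated a (l : R) :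
  is_lim K p_infty l -> ex_RInt_gen h (at_point a) (Rbar_locally p_infty).
Proof.
  intros K_lim.
  assert (RInt_cauchy :
    exists y, filterlim (fun b => RInt h a b) (Rbar_locally p_infty) (locally y)).
  { apply filterlim_locally_cauchy. intros eps.
    pose proof (proj1 (filterlim_locally K l) K_lim (pos_div_2 eps)) as K_near.
    exists (fun x => c <= x /\ ball l (pos_div_2 eps) (K x)). split.
    { apply filter_and; [exists c; intros; lra | exact K_near]. }
    intros u v [cu Ku] [cv Kv].
    change (Rabs (K u - l) < eps / 2) in Ku.
    change (Rabs (K v - l) < eps / 2) in Kv.
    change (Rabs (RInt h a v - RInt h a u) < eps).
    rewrite <- (RInt_Chasles h a u v) by apply h_int.
    change (Rabs (RInt h a u + RInt h u v - RInt h a u) < eps).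
    rewrite (Rplus_comm (RInt h a u)), Rplus_minus_r.
    eapply Rle_lt_trans; [apply abs_RInt_le_antiderivative; assumption|].
    replace (K v - K u) with ((K v - l) - (K u - l)) by ring.
    eapply Rle_lt_trans; [apply Rabs_triang|]. rewrite Rabs_Ropp. lra. }
  destruct RInt_cauchy as [y RInt_lim].
  exists y. apply is_RInt_gen_of_lim_RInt; [apply h_int | exact RInt_lim].
Qed.

End Domination.

Lemma exp_opp_lt1 t : 0 < t -> exp (- t) < 1.
Proof. intros t_gt0. rewrite <- exp_0. apply exp_increasing. lra. Qed.

Definition gumbel_loc (t : R) : R := ln (1 - exp (- t)).

Lemma exp_gumbel_loc t : 0 < t -> exp (gumbel_loc t) = 1 - exp (- t).
Proof. intros t_gt0. apply exp_ln. pose proof (exp_opp_lt1 t t_gt0). lra. Qed.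

Lemma gumbel_argE t x z : 0 < t -> gumbel_arg t x z = Rmax (x - t) (z + gumbel_loc t).
Proof. intros t_gt0. unfold gumbel_arg. destruct (Rlt_le_dec 0 t); [reflexivity | lra]. Qed.

Definition P0_tail_integrand (f : R -> R) (t z : R) : R := f (z + gumbel_loc t) * gumbel_density z.

Definition P0_tail (f : R -> R) (t b : R) : R :=
  RInt_gen (P0_tail_integrand f t) (at_point b) (Rbar_locally p_infty).

Section Tail.

Variables (f : R -> R) (L t : R).
Hypothesis f_lip : lipschitz_with L f.

Lemma continuous_P0_tail_integrand z : continuous (P0_tail_integrand f t) z.
Proof.
  apply (continuous_mult (fun z => f (z + gumbel_loc t)) gumbel_density);
    [|apply continuous_gumbel_density].
  apply (continuous_comp (fun z => z + gumbel_loc t) f).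
  - apply (ex_derive_continuous (V := R_NormedModule)). auto_derive. exact I.
  - apply (lipschitz_with_continuous L), f_lip.
Qed.

Let ex_RInt_P0_tail_integrand u v : ex_RInt (P0_tail_integrand f t) u v.
Proof.
  apply (ex_RInt_continuous (V := R_CompleteNormedModule)).
  intros; apply continuous_P0_tail_integrand.
Qed.

Lemma ex_RInt_gen_P0_tail_integrand b :
  ex_RInt_gen (P0_tail_integrand f t) (at_point b) (Rbar_locally p_infty).
Proof.
  set (A := Rabs (f 0) + Rabs L * Rabs (gumbel_loc t)).
  apply (ex_RInt_gen_dominated _ (fun z => (A + Rabs L * z) * exp (- z))
           (fun z => - (A + Rabs L + Rabs L * z) * exp (- z)) 0) with (l := 0).
  - apply continuous_P0_tail_integrand.
  - intros z z_ge0. unfold P0_tail_integrand.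
    rewrite Rabs_mult, (Rabs_pos_eq (gumbel_density z)) by apply gumbel_density_ge0.
    apply Rmult_le_compat; [apply Rabs_pos | apply gumbel_density_ge0 | |
                            apply gumbel_density_le_exp].
    pose proof (lipschitz_with_linear_growth L f (z + gumbel_loc t) f_lip).
    pose proof (Rabs_triang z (gumbel_loc t)). rewrite (Rabs_pos_eq z) in * by lra.
    pose proof (Rabs_pos L). unfold A. nra.
  - intros z. auto_derive; [exact I | ring].
  - intros z. apply (ex_derive_continuous (V := R_NormedModule)). auto_derive. exact I.
  - apply (is_lim_ext (fun z => - (A + Rabs L) * exp (- z) + - Rabs L * (z * exp (- z))));
      [intros; ring|].
    replace (Finite 0) with (Finite (- (A + Rabs L) * 0 + - Rabs L * 0)) by (f_equal; ring).
    apply is_lim_plus'.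
    + apply (is_lim_scal_l (fun z => exp (- z)) _ p_infty 0), is_lim_exp_opp.
    + apply (is_lim_scal_l (fun z => z * exp (- z)) _ p_infty 0), is_lim_mul_exp_opp.
Qed.

Lemma P0_tailE b : P0_tail f t b = P0_tail f t 0 - RInt (P0_tail_integrand f t) 0 b.
Proof.
  unfold P0_tail.
  rewrite <- (RInt_gen_Chasles (Fa := at_point 0) _ b).
  - rewrite RInt_gen_at_point by apply ex_RInt_P0_tail_integrand.
    change (plus ?p ?q) with (p + q).
    rewrite (Rplus_comm (RInt _ 0 b)). apply eq_sym, Rplus_minus_r.
  - apply ex_RInt_gen_at_point, ex_RInt_P0_tail_integrand.
  - apply ex_RInt_gen_P0_tail_integrand.
Qed.

Lemma is_derive_P0_tail b : is_derive (P0_tail f t) b (- P0_tail_integrand f t b).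
Proof.
  apply (is_derive_ext (fun b => P0_tail f t 0 - RInt (P0_tail_integrand f t) 0 b));
    [intros; symmetry; apply P0_tailE|].
  replace (- P0_tail_integrand f t b) with (minus zero (P0_tail_integrand f t b))
    by (unfold minus, plus, opp, zero; simpl; ring).
  apply (is_derive_minus (fun _ => P0_tail f t 0) (RInt (P0_tail_integrand f t) 0)).
  - apply (is_derive_const (K := R_AbsRing) (V := R_NormedModule)).
  - apply (is_derive_RInt _ _ 0); [|apply continuous_P0_tail_integrand].
    apply filter_forall; intros. apply (RInt_correct (V := R_CompleteNormedModule)).
    apply ex_RInt_P0_tail_integrand.
Qed.

End Tail.

Definition P0_closed (f : R -> R) (t x : R) : R :=
  f (x - t) * gumbel_cdf (x - t - gumbel_loc t) + P0_tail f t (x - t - gumbel_loc t).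

(* The boundary terms [f (x - t) * gumbel_density b] of the two summands cancel. *)
Lemma is_derive_P0_closed f L t x : lipschitz_with L f -> (forall y, ex_derive f y) ->
  is_derive (P0_closed f t) x (Derive f (x - t) * gumbel_cdf (x - t - gumbel_loc t)).
Proof.
  intros f_lip f_der. unfold P0_closed. auto_derive.
  - repeat split; [apply f_der | eexists; apply is_derive_gumbel_cdf |].
    eexists; apply (is_derive_P0_tail f L), f_lip.
  - rewrite (is_derive_unique gumbel_cdf _ _ (is_derive_gumbel_cdf _)),
      (is_derive_unique (P0_tail f t) _ _ (is_derive_P0_tail f L t f_lip _)).
    unfold P0_tail_integrand, Rminus.
    replace (x + - t + - gumbel_loc t + gumbel_loc t) with (x + - t) by ring.
    rewrite (Derive_ext (fun y => f y) f) by reflexivity. ring.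
Qed.

Lemma is_RInt_gen_P0_integrand f L t x : 0 < t -> lipschitz_with L f ->
  is_RInt_gen (P0_integrand t f x) (Rbar_locally m_infty) (Rbar_locally p_infty) (P0_closed f t x).
Proof.
  intros t_gt0 f_lip.
  set (b := x - t - gumbel_loc t).
  assert (lower : is_RInt_gen (P0_integrand t f x) (Rbar_locally m_infty) (at_point b)
                    (f (x - t) * gumbel_cdf b)).
  { apply (is_RInt_gen_ext (fun z => scal (f (x - t)) (gumbel_density z))).
    - exists (fun u => u < b) (fun v => v = b); [exists b; auto | reflexivity |].
      intros u v u_lt -> z z_in. simpl in z_in. rewrite Rmin_left, Rmax_right in z_in by lra.
      unfold P0_integrand. rewrite gumbel_argE, Rmax_left by (unfold b in z_in; lra).
      reflexivity.
    - apply (is_RInt_gen_scal (V := R_NormedModule) _ (f (x - t)) (gumbel_cdf b)).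
      apply is_RInt_gen_gumbel_density_lower. }
  assert (upper : is_RInt_gen (P0_integrand t f x) (at_point b) (Rbar_locally p_infty)
                    (P0_tail f t b)).
  { apply (is_RInt_gen_ext (P0_tail_integrand f t)).
    - exists (fun u => u = b) (fun v => b < v); [reflexivity | exists b; auto |].
      intros u v -> v_gt z z_in. simpl in z_in. rewrite Rmin_left, Rmax_right in z_in by lra.
      unfold P0_integrand, P0_tail_integrand.
      rewrite gumbel_argE, Rmax_right by (unfold b in z_in; lra). reflexivity.
    - apply (RInt_gen_correct (V := R_CompleteNormedModule)).
      apply (ex_RInt_gen_P0_tail_integrand f L), f_lip. }
  exact (is_RInt_gen_Chasles _ b _ _ lower upper).
Qed.

Lemma P0_closedE f L t : 0 < t -> lipschitz_with L f -> P0 t f = P0_closed f t.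
Proof.
  intros t_gt0 f_lip. apply functional_extensionality; intros x.
  apply (is_RInt_gen_unique (V := R_CompleteNormedModule)).
  apply (is_RInt_gen_P0_integrand f L); assumption.
Qed.

Lemma is_RInt_gen_P0_integrand_0 f x :
  is_RInt_gen (P0_integrand 0 f x) (Rbar_locally m_infty) (Rbar_locally p_infty) (f x).
Proof.
  rewrite <- (Rmult_1_r (f x)).
  apply (is_RInt_gen_ext (fun z => scal (f x) (gumbel_density z))).
  - apply filter_forall; intros ab z _. unfold P0_integrand, gumbel_arg.
    destruct (Rlt_le_dec 0 0); [lra|]. rewrite Rminus_0_r. reflexivity.
  - apply (is_RInt_gen_scal (V := R_NormedModule) _ (f x) 1), is_RInt_gen_gumbel_density.
Qed.

Lemma P0_0 f : P0 0 f = f.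
Proof.
  apply functional_extensionality; intros x.
  apply (is_RInt_gen_unique (V := R_CompleteNormedModule)), is_RInt_gen_P0_integrand_0.
Qed.

Lemma ex_RInt_gen_L0_integrand g M x :
  (forall y, continuous (Derive g) y) -> (forall y, Rabs (Derive g y) <= M) ->
  ex_RInt_gen (L0_integrand g x) (at_point 0) (Rbar_locally p_infty).
Proof.
  intros g'_cont g'_le.
  apply (ex_RInt_gen_dominated _ (fun y => M * exp (- y)) (fun y => - M * exp (- y)) 0)
    with (l := 0).
  - intros y. apply (continuous_mult (fun y => Derive g (x + y)) (fun y => exp (- y))).
    + apply (continuous_comp (fun y => x + y) (Derive g)); [|apply g'_cont].
      apply (ex_derive_continuous (V := R_NormedModule)). auto_derive. exact I.
    + apply (ex_derive_continuous (V := R_NormedModule)). auto_derive. exact I.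
  - intros y _. unfold L0_integrand.
    rewrite Rabs_mult, (Rabs_pos_eq (exp (- y))) by (left; apply exp_pos).
    apply Rmult_le_compat_r; [left; apply exp_pos | apply g'_le].
  - intros y. auto_derive; [exact I | ring].
  - intros y. apply (ex_derive_continuous (V := R_NormedModule)). auto_derive. exact I.
  - replace (Finite 0) with (Finite (- M * 0)) by (f_equal; ring).
    apply (is_lim_scal_l (fun y => exp (- y)) _ p_infty 0), is_lim_exp_opp.
Qed.

Lemma L0_le g M c x :
  (forall y, continuous (Derive g) y) -> (forall y, Rabs (Derive g y) <= M * gumbel_cdf (y - c)) ->
  Rabs (L0 g x) <= M * (1 + exp (- c)).
Proof.
  intros g'_cont g'_le.
  assert (M_ge0 : 0 <= M).
  { pose proof (g'_le 0). pose proof (Rabs_pos (Derive g 0)). pose proof (gumbel_cdf_gt0 (0 - c)).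
    nra. }
  assert (g'_leM : forall y, Rabs (Derive g y) <= M).
  { intros y. eapply Rle_trans; [apply g'_le|]. pose proof (gumbel_cdf_le1 (y - c)). nra. }
  set (I := RInt_gen (L0_integrand g x) (at_point 0) (Rbar_locally p_infty)).
  assert (I_le : Rabs I <= M * (exp (x - c) * (1 - gumbel_cdf (x - c)))).
  { refine (RInt_gen_norm (V := R_CompleteNormedModule) (Fa := at_point 0)
              (Fb := Rbar_locally p_infty) (L0_integrand g x)
              (fun y => M * (gumbel_cdf (y + (x - c)) * exp (- y))) I _ _ _ _ _).
    - exists (fun u => u = 0) (fun v => 0 < v); [reflexivity | exists 0; auto |].
      intros u v -> v_gt. simpl. lra.
    - apply filter_forall. intros ab y _.
      change (Rabs (L0_integrand g x y) <= M * (gumbel_cdf (y + (x - c)) * exp (- y))).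
      unfold L0_integrand. rewrite Rabs_mult, (Rabs_pos_eq (exp (- y))) by (left; apply exp_pos).
      replace (y + (x - c)) with (x + y - c) by ring. rewrite <- Rmult_assoc.
      apply Rmult_le_compat_r; [left; apply exp_pos | apply g'_le].
    - apply (RInt_gen_correct (V := R_CompleteNormedModule)).
      apply (ex_RInt_gen_L0_integrand g M); assumption.
    - apply (is_RInt_gen_scal (V := R_NormedModule) _ M (exp (x - c) * (1 - gumbel_cdf (x - c)))).
      apply is_RInt_gen_gumbel_cdf_mul_exp. }
  assert (exp_xc : exp (- x) * exp (x - c) = exp (- c)) by (rewrite <- exp_plus; f_equal; ring).
  unfold L0. fold I.
  eapply Rle_trans; [apply Rabs_triang|].
  rewrite Rabs_Ropp, Rabs_mult, (Rabs_pos_eq (exp (- x))) by (left; apply exp_pos).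
  assert (tail_le : exp (- x) * Rabs I <= M * exp (- c)).
  { apply Rle_trans with (M * exp (- c) * (1 - gumbel_cdf (x - c))).
    - rewrite <- exp_xc.
      replace (M * (exp (- x) * exp (x - c)) * (1 - gumbel_cdf (x - c)))
        with (exp (- x) * (M * (exp (x - c) * (1 - gumbel_cdf (x - c))))) by ring.
      apply Rmult_le_compat_l; [left; apply exp_pos | exact I_le].
    - assert (0 <= M * exp (- c)) by (pose proof (exp_pos (- c)); apply Rmult_le_pos; lra).
      pose proof (gumbel_cdf_gt0 (x - c)). nra. }
  pose proof (g'_leM x). lra.
Qed.

Section Positive_time.

Variables (f : R -> R) (L t : R).
Hypothesis t_gt0 : 0 < t.
Hypothesis f_der : forall y, ex_derive f y.
Hypothesis f_lip : lipschitz_with L f.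

Lemma is_derive_P0 x :
  is_derive (P0 t f) x (Derive f (x - t) * gumbel_cdf (x - (t + gumbel_loc t))).
Proof.
  rewrite (P0_closedE f L) by assumption.
  replace (x - (t + gumbel_loc t)) with (x - t - gumbel_loc t) by ring.
  apply (is_derive_P0_closed f L); assumption.
Qed.

Lemma Derive_P0E x : Derive (P0 t f) x = Derive f (x - t) * gumbel_cdf (x - (t + gumbel_loc t)).
Proof. apply is_derive_unique, is_derive_P0. Qed.

Lemma Derive_P0_le M x : (forall y, Rabs (Derive f y) <= M) ->
  Rabs (Derive (P0 t f) x) <= M * gumbel_cdf (x - (t + gumbel_loc t)).
Proof.
  intros f'_le. rewrite Derive_P0E, Rabs_mult, (Rabs_pos_eq (gumbel_cdf _))
    by (left; apply gumbel_cdf_gt0).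
  apply Rmult_le_compat_r; [left; apply gumbel_cdf_gt0 | apply f'_le].
Qed.

Lemma Derive_P0_lipschitz L' B :
  lipschitz_with L' (Derive f) -> (forall y, Rabs (Derive f y) <= B) ->
  lipschitz_with (L' + B) (Derive (P0 t f)).
Proof.
  intros f'_lip f'_le x y. rewrite !Derive_P0E.
  replace (L' + B) with (L' * 1 + B * 1) by ring.
  apply (lipschitz_with_mult _ _ _ _ (fun x => Derive f (x - t))
           (fun x => gumbel_cdf (x - (t + gumbel_loc t)))).
  - apply lipschitz_with_shift, f'_lip.
  - apply lipschitz_with_shift, gumbel_cdf_lipschitz.
  - intros; apply f'_le.
  - intros z. rewrite Rabs_pos_eq by (left; apply gumbel_cdf_gt0). apply gumbel_cdf_le1.
Qed.

Lemma L0_P0_le M x : (forall y, continuous (Derive f) y) -> (forall y, Rabs (Derive f y) <= M) ->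
  Rabs (L0 (P0 t f) x) <= M / (1 - exp (- t)).
Proof.
  intros f'_cont f'_le.
  replace (M / (1 - exp (- t))) with (M * (1 + exp (- (t + gumbel_loc t)))).
  - apply L0_le.
    + intros y. set (c := t + gumbel_loc t).
      apply (continuous_ext (fun y => Derive f (y - t) * gumbel_cdf (y - c))).
      { intros z; symmetry; apply Derive_P0E. }
      apply (continuous_mult (fun y => Derive f (y - t)) (fun y => gumbel_cdf (y - c))).
      * apply (continuous_comp (fun y => y - t) (Derive f)); [|apply f'_cont].
        apply (ex_derive_continuous (V := R_NormedModule)). auto_derive. exact I.
      * apply (lipschitz_with_continuous 1), lipschitz_with_shift, gumbel_cdf_lipschitz.
    + intros y. apply Derive_P0_le, f'_le.
  - rewrite Ropp_plus_distr, exp_plus, (exp_Ropp (gumbel_loc t)), exp_gumbel_loc by assumption.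
    pose proof (exp_opp_lt1 t t_gt0). field. lra.
Qed.

End Positive_time.

Lemma Lip2_of_Derive_bounds (g : R -> R) L :
  (forall x, ex_derive g x) -> (forall x, Rabs (Derive g x) <= 1) -> lipschitz_with L (Derive g) ->
  in_Lip2 g /\ lipschitz_with 1 g /\
  (forall x, ex_RInt_gen (L0_integrand g x) (at_point 0) (Rbar_locally p_infty)).
Proof.
  intros g_der g'_le g'_lip.
  assert (g_lip : lipschitz_with 1 g).
  { apply (lipschitz_with_derive_le g (Derive g)); [|exact g'_le].
    intros x; apply Derive_correct, g_der. }
  split; [split; [exact g_der | split; [exists 1 | exists L]; assumption] | split; [exact g_lip|]].
  intros x. apply (ex_RInt_gen_L0_integrand g 1); [|exact g'_le].
  intros y; apply (lipschitz_with_continuous L), g'_lip.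
Qed.

Theorem corollary2p5 (f : R -> R) :
  in_Lip2 f ->
  lipschitz_with 1 f ->
  lipschitz_with 1 (Derive f) ->
  forall t : R, 0 <= t ->
    (forall x, ex_RInt_gen (P0_integrand t f x)
                 (Rbar_locally m_infty) (Rbar_locally p_infty)) /\
    in_Lip2 (P0 t f) /\
    lipschitz_with 1 (P0 t f) /\
    lipschitz_with 2 (Derive (P0 t f)) /\
    (forall x, ex_RInt_gen (L0_integrand (P0 t f) x)
                 (at_point 0) (Rbar_locally p_infty)) /\
    (0 < t -> forall M : R, (forall x, Rabs (Derive f x) <= M) ->
       forall x, Rabs (L0 (P0 t f) x) <= 2 / (1 - exp (- t)) * M).
Proof.
  intros [f_der _] f_lip f'_lip t t_ge0.
  assert (f'_le1 : forall y, Rabs (Derive f y) <= 1).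
  { intros y. apply (lipschitz_with_is_derive_le 1 f y _ f_lip), Derive_correct, f_der. }
  assert (f'_cont : forall y, continuous (Derive f) y).
  { intros y. apply (lipschitz_with_continuous 1), f'_lip. }
  destruct (Rle_lt_or_eq_dec 0 t t_ge0) as [t_gt0 | <-].
  - assert (P0'_le1 : forall x, Rabs (Derive (P0 t f) x) <= 1).
    { intros x. eapply Rle_trans; [apply (Derive_P0_le f 1 t t_gt0 f_der f_lip 1 x f'_le1)|].
      rewrite Rmult_1_l. apply gumbel_cdf_le1. }
    assert (P0'_lip : lipschitz_with 2 (Derive (P0 t f))).
    { replace 2 with (1 + 1) by ring. apply (Derive_P0_lipschitz f 1); assumption. }
    destruct (Lip2_of_Derive_bounds (P0 t f) 2) as (P0_Lip2 & P0_lip & L0_ex); try assumption.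
    { intros x. eexists. apply (is_derive_P0 f 1); assumption. }
    split; [intros x; eexists; apply (is_RInt_gen_P0_integrand f 1); assumption|].
    do 4 (split; [assumption|]).
    intros _ M f'_le x.
    eapply Rle_trans; [apply (L0_P0_le f 1 t t_gt0 f_der f_lip M x f'_cont f'_le)|].
    assert (0 <= M) by (eapply Rle_trans; [apply Rabs_pos | apply (f'_le 0)]).
    pose proof (exp_opp_lt1 t t_gt0).
    unfold Rdiv. pose proof (Rinv_0_lt_compat (1 - exp (- t)) ltac:(lra)). nra.
  - assert (f'_lip2 : lipschitz_with 2 (Derive f))
      by (apply (lipschitz_with_weaken 1); [lra | exact f'_lip]).
    split; [intros x; eexists; apply is_RInt_gen_P0_integrand_0|].
    rewrite P0_0.
    destruct (Lip2_of_Derive_bounds f 2) as (f_Lip2 & _ & L0_ex); try assumption.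
    repeat (split; [assumption|]). intros zero_pos; lra.
Qed.
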